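(* For any odd prime $p$ and any non-negative integer $k$, \[ B^{(-k)}_{p-1}\equiv\begin{cases}1\pmod p & \text{if } k=0 \text{ or } k\not\equiv 0\pmod{p-1},\\ 2\pmod p & \text{if } k\neq 0 \text{ and } k\equiv 0\pmod{p-1}.\end{cases} \]
   Context: For any integer $k$, let $\mathrm{Li}_k(t)=\sum_{n=1}^{\infty} t^n/n^k$. The poly-Bernoulli numbers $B^{(k)}_n$ ($n\ge 0$) are defined by $\frac{\mathrm{Li}_k(1-e^{-t})}{1-e^{-t}}=\sum_{n=0}^{\infty}B^{(k)}_n\frac{t^n}{n!}$. For non-positive upper index these are integers. *)

From mathcomp Require Import all_boot all_order all_algebra.
Set Implicit Arguments. Unset Strict Implicit. Unset Printing Implicit Defensive.
Import Order.TTheory GRing.Theory Num.Theory.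
Local Open Scope ring_scope.

(* Poly-Bernoulli numbers with non-positive upper index -k, defined from the
   generating function  Li_{-k}(1-e^{-t})/(1-e^{-t}) = sum_n B_n^{(-k)} t^n/n!,
   computed as formal power series over rat, truncated at degree n.
   Li_{-k}(x)/x = sum_{m>=0} (m+1)^k x^m as a formal power series, and we
   substitute x := 1 - e^{-t}, which has zero constant term, so only the terms
   m <= n and the exponential's terms of degree <= n affect the coefficient
   of t^n. *)

Definition expneg_trunc (N : nat) : {poly rat} :=
  \poly_(j < N.+1) ((-1) ^+ j / (j`!)%:R).

Definition polyB_gf_trunc (k N : nat) : {poly rat} :=
  \sum_(m < N.+1) ((m.+1 ^ k)%N)%:R *: (1 - expneg_trunc N) ^+ m.

Definition polyBernoulli_neg (k n : nat) : rat :=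
  (n`!)%:R * (polyB_gf_trunc k n)`_n.

(* Expanding (1 - e^{-t})^m binomially gives the integer formula
     B_n^{(-k)} = sum_{m <= n} (m+1)^k sum_{j <= m} (-1)^j C(m,j) (-j)^n.
   For n = p - 1, which is even, Fermat gives (-j)^n = 1 mod p for 0 < j <= m < p,
   so the inner sum is (1 - 1)^m - 1 and B_{p-1}^{(-k)} = -(2^k + ... + p^k), i.e.
   1 - sum_{x in F_p} x^k mod p.  That power sum is -1 if 0 < k and p - 1 | k, and 0
   otherwise: for g != 0 with g^k != 1, substituting x |-> g x gives S = g^k S. *)

From mathcomp Require Import all_boot all_order all_algebra all_fingroup all_solvable all_field.
From mathcomp Require Import ring.
Set Implicit Arguments.
Unset Strict Implicit.
Unset Printing Implicit Defensive.
Import Order.TTheory GRing.Theory Num.Theory.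
Local Open Scope ring_scope.

Definition polyBernoulli_sum (R : pzRingType) (k n : nat) : R :=
  \sum_(m < n.+1) m.+1%:R ^+ k *
    \sum_(j < m.+1) (-1) ^+ j * (- j%:R) ^+ n *+ 'C(m, j).

Lemma rmorph_polyBernoulli_sum (R S : pzRingType) (f : {rmorphism R -> S}) k n :
  f (polyBernoulli_sum R k n) = polyBernoulli_sum S k n.
Proof.
rewrite rmorph_sum; apply: eq_bigr => m _.
rewrite rmorphM rmorph_sum rmorphXn (rmorph_nat f); congr (_ * _).
apply: eq_bigr => j _.
by rewrite rmorphMn rmorphM !rmorphXn !rmorphN rmorph1 rmorph_nat.
Qed.

Lemma coef_expneg_truncX N j d : (d <= N)%N ->
  ((expneg_trunc N) ^+ j)`_d = (- j%:R) ^+ d / d`!%:R.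
Proof.
elim: j d => [|j IHj] d le_dN.
  by rewrite expr0 coefC oppr0 expr0n; case: d {le_dN} => [|d]; rewrite ?divr1 ?mul0r.
have fact_neq0 i : i`!%:R != 0 :> rat by rewrite pnatr_eq0 -lt0n fact_gt0.
rewrite exprSr coefM -natr1 opprD addrC exprDn mulr_suml.
apply: eq_bigr => -[i /= lt_id] _.
rewrite IHj ?(leq_trans _ le_dN) // /expneg_trunc coef_poly.
rewrite ifT ?ltnS ?(leq_trans (leq_subr _ _) le_dN) //.
have -> : d`!%:R = 'C(d, i)%:R * (i`!%:R * (d - i)`!%:R) :> rat.
  by rewrite -!natrM bin_fact.
have bin_neq0 : 'C(d, i)%:R != 0 :> rat by rewrite pnatr_eq0 -lt0n bin_gt0.
by rewrite -mulr_natr; field; rewrite !fact_neq0 bin_neq0.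
Qed.

Lemma polyBernoulli_negE k n : polyBernoulli_neg k n = polyBernoulli_sum rat k n.
Proof.
rewrite /polyBernoulli_neg /polyB_gf_trunc coef_sum mulr_sumr.
apply: eq_bigr => m _; rewrite coefZ natrX mulrCA; congr (_ * _).
rewrite exprDn coef_sum mulr_sumr; apply: eq_bigr => j _.
rewrite expr1n mul1r coefMn -scaleN1r exprZn coefZ coef_expneg_truncX //.
have fact_neq0 : n`!%:R != 0 :> rat by rewrite pnatr_eq0 -lt0n fact_gt0.
by rewrite mulrnAr; congr (_ *+ _); field.
Qed.

Section FiniteField.
Variable F : finFieldType.

Lemma natr_card_finField : #|F|%:R = 0 :> F.
Proof. by have := @expg_cardG _ [set: F]%G (GRing.one F) (in_setT _); rewrite cardsT. Qed.

Lemma expf_card_pred (x : F) : x != 0 -> x ^+ #|F|.-1 = 1.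
Proof.
move=> x_neq0; apply: (mulfI x_neq0); rewrite mulr1 -exprS.
by rewrite (ltn_predK (finNzRing_gt1 F)) expf_card.
Qed.

Lemma exists_expf_neq1 k :
  ~~ (#|F|.-1 %| k)%N -> exists2 g : F, g != 0 & g ^+ k != 1.
Proof.
move=> ndvd_k; apply/exists_inP; apply: contraT; rewrite negb_exists_in.
move=> /forall_inP all1.
have r_gt0 : (0 < k %% #|F|.-1)%N by rewrite lt0n.
have roots_nonzero : all (k %% #|F|.-1).-unity_root (enum (predC1 (0 : F))).
  apply/allP => x; rewrite mem_enum => /= x_neq0.
  have := all1 x x_neq0; rewrite negbK {1}(divn_eq k #|F|.-1) exprD mulnC exprM.
  by rewrite expf_card_pred // expr1n mul1r unity_rootE.
have N_gt0 : (0 < #|F|.-1)%N by rewrite -ltnS (ltn_predK (finNzRing_gt1 F)) finNzRing_gt1.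
have := max_unity_roots r_gt0 roots_nonzero (enum_uniq _).
by rewrite -cardE cardC1 leqNgt ltn_pmod.
Qed.

Lemma sum_expr_finField k :
  \sum_(x : F) x ^+ k = if (0 < k)%N && (#|F|.-1 %| k)%N then -1 else 0.
Proof.
have [-> | k_gt0] /= := posnP k.
  by rewrite (eq_bigr (fun=> 1)) => [|x _]; rewrite ?sumr_const ?natr_card_finField.
case: ifP => [dvd_k | /negbT ndvd_k].
  rewrite (bigD1 0) //= expr0n gtn_eqF // add0r (eq_bigr (fun=> 1)) => [|x x_neq0].
    apply/eqP; rewrite sumr_const cardC1 -addr_eq0 -mulrSr.
    by rewrite (ltn_predK (finNzRing_gt1 F)) natr_card_finField.
  by case/dvdnP: dvd_k => q ->; rewrite mulnC exprM expf_card_pred // expr1n.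
have [g g_neq0 gk_neq1] := exists_expf_neq1 ndvd_k.
have sum_dilate : \sum_(x : F) x ^+ k = g ^+ k * \sum_(x : F) x ^+ k.
  rewrite {1}(reindex_inj (mulfI g_neq0)) mulr_sumr /=.
  by apply: eq_bigr => x _; rewrite exprMn.
have : (g ^+ k - 1) * \sum_(x : F) x ^+ k = 0 by rewrite mulrBl mul1r -sum_dilate subrr.
by move/eqP; rewrite mulf_eq0 subr_eq0 (negbTE gk_neq1) => /eqP.
Qed.
End FiniteField.

Lemma sum_signed_binomial_power (R : pzRingType) m n :
    (0 < n)%N -> ~~ odd n -> (forall j, (0 < j <= m)%N -> j%:R ^+ n = 1 :> R) ->
  \sum_(j < m.+1) (-1) ^+ j * (- j%:R) ^+ n *+ 'C(m, j) = 0 ^+ m - 1 :> R.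
Proof.
move=> n_gt0 n_even unit_pow.
have -> : 0 ^+ m = (1 - 1) ^+ m :> R by rewrite subrr.
rewrite exprBn_comm; last exact: commr1.
rewrite !big_ord_recl /= oppr0 expr0n gtn_eqF // mulr0 mul0rn add0r.
rewrite expr0 !expr1n !mulr1 bin0 addrAC subrr add0r.
have sign_n : (-1) ^+ n = 1 :> R by rewrite -signr_odd (negbTE n_even).
apply: eq_bigr => i _; rewrite [(- _) ^+ n]exprNn sign_n mul1r !expr1n !mulr1.
by rewrite unit_pow ?mulr1 // /bump /= add1n ltn_ord.
Qed.

Lemma sum_nat_shift (V : zmodType) n (f : nat -> V) :
  f n = f 0 -> \sum_(0 <= i < n) f i.+1 = \sum_(0 <= i < n) f i.
Proof.
move=> fn_f0; apply: (addrI (f 0)).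
by rewrite -big_nat_recl // addrC -fn_f0 -big_nat_recr.
Qed.

Lemma sum_Fp (V : zmodType) p (f : 'F_p -> V) : prime p ->
  \sum_(x : 'F_p) f x = \sum_(0 <= i < p) f i%:R.
Proof.
move=> p_prime.
have -> : \sum_(x : 'F_p) f x = \sum_(0 <= i < (Zp_trunc (pdiv p)).+2) f i%:R.
  by rewrite big_mkord; apply: eq_bigr => i _; rewrite natr_Zp.
by move: (Zp_trunc _).+2 (Fp_cast p_prime) => n ->.
Qed.

Lemma sum_mul_expr0_sub1 (R : pzRingType) n (a : nat -> R) : (0 < n)%N ->
  \sum_(0 <= i < n) a i * (0 ^+ i - 1) = a 0%N - \sum_(0 <= i < n) a i.
Proof.
move=> n_gt0; rewrite (eq_bigr (fun i => a i * 0 ^+ i - a i)) => [|i _]; last first.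
  by rewrite mulrBr mulr1.
rewrite sumrB big_ltn // expr0 mulr1 big_nat_cond big1 ?addr0 // => i.
by case/andP=> /andP[i_gt0 _] _; rewrite expr0n gtn_eqF // mulr0.
Qed.

Lemma polyBernoulli_sum_Fp p k : prime p -> odd p ->
  polyBernoulli_sum 'F_p k p.-1 = 1 - \sum_(x : 'F_p) x ^+ k.
Proof.
move=> p_prime p_odd; have p_gt0 := prime_gt0 p_prime.
have unit_pow j : (0 < j <= p.-1)%N -> j%:R ^+ p.-1 = 1 :> 'F_p.
  case/andP=> j_gt0 le_jN; have := @expf_card_pred _ (j%:R : 'F_p).
  rewrite card_Fp //; apply; rewrite -(dvdn_pcharf (pchar_Fp p_prime)).
  by rewrite gtnNdvd // -(prednK p_gt0) ltnS.
have inner m : (m < p.-1.+1)%N ->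
    \sum_(j < m.+1) (-1) ^+ j * (- j%:R) ^+ p.-1 *+ 'C(m, j) = 0 ^+ m - 1 :> 'F_p.
  move=> lt_mp; apply: sum_signed_binomial_power => [||j /andP[j_gt0 le_jm]].
  - by rewrite -ltnS prednK // prime_gt1.
  - by move: p_odd; rewrite -{1}(prednK p_gt0).
  - by rewrite unit_pow // j_gt0 (leq_trans le_jm).
rewrite /polyBernoulli_sum (eq_bigr (fun m : 'I_p.-1.+1 => m.+1%:R ^+ k * (0 ^+ m - 1))).
  rewrite -(big_mkord xpredT (fun m => m.+1%:R ^+ k * (0 ^+ m - 1))) prednK //.
  rewrite (sum_Fp _ p_prime) -(@sum_nat_shift _ p (fun i => i%:R ^+ k)); last first.
    by rewrite (pchar_Fp_0 p_prime).
  by rewrite sum_mul_expr0_sub1 // expr1n.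
by move=> m _; rewrite inner.
Qed.

Theorem theorem3p1 (p k : nat) (hp : prime p) (hodd : odd p) :
  exists z : int,
    polyBernoulli_neg k p.-1 = z%:~R /\
    (z = (if (k == 0)%N || (k %% p.-1 != 0)%N then 1 else 2) %[mod p%:Z])%Z.
Proof.
exists (polyBernoulli_sum int k p.-1); split.
  by rewrite polyBernoulli_negE (rmorph_polyBernoulli_sum intr).
apply/eqP; rewrite eqz_mod_dvd (dvdz_pcharf (pchar_Fp hp)) rmorphB /=.
rewrite (rmorph_polyBernoulli_sum intr) polyBernoulli_sum_Fp // sum_expr_finField.
rewrite card_Fp // /dvdn -lt0n.
have [-> | k_gt0] /= := posnP k; first by rewrite subr0 subrr.
have [_ | _] /= := posnP (k %% p.-1).
  by rewrite opprK subr_eq0; apply/eqP.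
by rewrite subr0 subrr.
Qed.
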